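(* An algebra $\mathbf{A}$ has a minority term if and only if it has a Maltsev term and a minority-majority term.
   Context: A ternary term $m(x,y,z)$ of an algebra $\mathbf{A}$ is a minority term if its interpretation on $A$ satisfies the identities $m(y,x,x)\approx m(x,y,x)\approx m(x,x,y)\approx y$. A ternary term $p(x,y,z)$ of $\mathbf{A}$ is a Maltsev term if $p(x,x,y)\approx p(y,x,x)\approx y$ holds in $\mathbf{A}$. A 6-ary term $t(x_1,\dots,x_6)$ of $\mathbf{A}$ is a minority-majority term if $\mathbf{A}$ satisfies $t(y,x,x,z,y,y)\approx y$, $t(x,y,x,y,z,y)\approx y$, and $t(x,x,y,y,y,z)\approx y$. *)

(* Universal algebra: an algebra is given by a carrier type A,
   a type F of operation symbols with arity ar : F -> nat, and interpretations
   op f : ('I_(ar f) -> A) -> A. *)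
From mathcomp Require Import all_boot.
Set Implicit Arguments. Unset Strict Implicit. Unset Printing Implicit Defensive.

Inductive term (F : Type) (ar : F -> nat) (n : nat) : Type :=
  | Var of 'I_n
  | App (f : F) of ('I_(ar f) -> term ar n).

Fixpoint eval (A F : Type) (ar : F -> nat) (op : forall f : F, ('I_(ar f) -> A) -> A)
  (n : nat) (env : 'I_n -> A) (t : term ar n) : A :=
  match t with
  | Var i => env i
  | App f ts => op f (fun j => eval op env (ts j))
  end.

Definition top3 (A F : Type) (ar : F -> nat) (op : forall f : F, ('I_(ar f) -> A) -> A)
  (t : term ar 3) (x y z : A) : A :=
  eval op (fun i : 'I_3 => nth x [:: x; y; z] i) t.

Definition top6 (A F : Type) (ar : F -> nat) (op : forall f : F, ('I_(ar f) -> A) -> A)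
  (t : term ar 6) (x1 x2 x3 x4 x5 x6 : A) : A :=
  eval op (fun i : 'I_6 => nth x1 [:: x1; x2; x3; x4; x5; x6] i) t.

Definition is_minority_term (A F : Type) (ar : F -> nat)
  (op : forall f : F, ('I_(ar f) -> A) -> A) (m : term ar 3) : Prop :=
  forall x y : A, top3 op m y x x = y /\ top3 op m x y x = y /\ top3 op m x x y = y.

Definition is_maltsev_term (A F : Type) (ar : F -> nat)
  (op : forall f : F, ('I_(ar f) -> A) -> A) (p : term ar 3) : Prop :=
  forall x y : A, top3 op p x x y = y /\ top3 op p y x x = y.

Definition is_minority_majority_term (A F : Type) (ar : F -> nat)
  (op : forall f : F, ('I_(ar f) -> A) -> A) (t : term ar 6) : Prop :=
  forall x y z : A,
    top6 op t y x x z y y = y /\ top6 op t x y x y z y = y /\ top6 op t x x y y y z = y.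

(* A minority term is itself a Maltsev term, and m(x1,x2,x3) viewed as a 6-ary
   term is a minority-majority term.  Conversely, from a Maltsev term p and a
   minority-majority term t the term
     m(x,y,z) = t(x, y, z, p(y,x,z), p(x,y,z), p(x,z,y))
   is a minority term: on each of the three minority patterns two of the three
   Maltsev applications collapse to the value y, putting the arguments of t into
   the matching minority-majority pattern. *)
From mathcomp Require Import all_boot.
From Stdlib Require Import FunctionalExtensionality.
Set Implicit Arguments. Unset Strict Implicit.

Section TermSubstitution.
Variables (A F : Type) (ar : F -> nat) (op : forall f : F, ('I_(ar f) -> A) -> A).

Fixpoint subst n k (s : 'I_n -> term ar k) (t : term ar n) : term ar k :=
  match t with
  | Var i => s i
  | App f ts => App (fun j => subst s (ts j))
  end.

Lemma eval_subst n k (s : 'I_n -> term ar k) (env : 'I_k -> A) (t : term ar n) :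
  eval op env (subst s t) = eval op (fun i => eval op env (s i)) t.
Proof.
elim: t => [i|f ts IH] //=; congr (op _).
by apply: functional_extensionality => j; exact: IH.
Qed.

Definition widen3 (t : term ar 3) : term ar 6 :=
  subst (fun i => Var ar (widen_ord (isT : 3 <= 6) i)) t.

Lemma top6_widen3 (t : term ar 3) x1 x2 x3 x4 x5 x6 :
  top6 op (widen3 t) x1 x2 x3 x4 x5 x6 = top3 op t x1 x2 x3.
Proof.
rewrite /top6 /top3 eval_subst; congr (eval _ _ _).
by apply: functional_extensionality => -[[|[|[|i]]] Hi].
Qed.

Definition var3 (i : nat) (Hi : i < 3) : term ar 3 := Var ar (Ordinal Hi).

Definition subst3 (t : term ar 3) (a b c : term ar 3) : term ar 3 :=
  subst (fun i => nth (@var3 0 isT) [:: a; b; c] i) t.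

Definition subst6 (t : term ar 6) (a b c d e g : term ar 3) : term ar 3 :=
  subst (fun i => nth (@var3 0 isT) [:: a; b; c; d; e; g] i) t.

Lemma top3_var3 (i : nat) (Hi : i < 3) x y z :
  top3 op (var3 Hi) x y z = nth x [:: x; y; z] i.
Proof. by []. Qed.

Lemma top3_subst3 (t a b c : term ar 3) x y z :
  top3 op (subst3 t a b c) x y z =
  top3 op t (top3 op a x y z) (top3 op b x y z) (top3 op c x y z).
Proof.
rewrite /top3 eval_subst; congr (eval _ _ _).
by apply: functional_extensionality => -[[|[|[|i]]] Hi].
Qed.

Lemma top3_subst6 (t : term ar 6) (a b c d e g : term ar 3) x y z :
  top3 op (subst6 t a b c d e g) x y z =
  top6 op t (top3 op a x y z) (top3 op b x y z) (top3 op c x y z)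
            (top3 op d x y z) (top3 op e x y z) (top3 op g x y z).
Proof.
rewrite /top3 /top6 eval_subst; congr (eval _ _ _).
by apply: functional_extensionality => -[[|[|[|[|[|[|i]]]]]] Hi].
Qed.

End TermSubstitution.

Section MinorityTerms.
Variables (A F : Type) (ar : F -> nat) (op : forall f : F, ('I_(ar f) -> A) -> A).

Lemma minority_maltsev (m : term ar 3) :
  is_minority_term op m -> is_maltsev_term op m.
Proof. by move=> Hm x y; have [? [? ?]] := Hm x y. Qed.

Lemma minority_minority_majority (m : term ar 3) :
  is_minority_term op m -> is_minority_majority_term op (widen3 m).
Proof. by move=> Hm x y z; rewrite !top6_widen3; exact: Hm. Qed.

Definition minority_of_maltsev (p : term ar 3) (t : term ar 6) : term ar 3 :=
  let x := var3 ar (isT : 0 < 3) in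
  let y := var3 ar (isT : 1 < 3) in
  let z := var3 ar (isT : 2 < 3) in
  subst6 t x y z (subst3 p y x z) (subst3 p x y z) (subst3 p x z y).

Lemma minority_of_maltsevP (p : term ar 3) (t : term ar 6) :
  is_maltsev_term op p -> is_minority_majority_term op t ->
  is_minority_term op (minority_of_maltsev p t).
Proof.
move=> Hp Ht x y.
rewrite /minority_of_maltsev !top3_subst6 !top3_subst3 !top3_var3 /=.
have [-> ->] := Hp x y.
have [H1 [H2 H3]] := Ht x y (top3 op p x y x).
by split; [exact: H1 | split; [exact: H2 | exact: H3]].
Qed.

End MinorityTerms.

Theorem theorem3p1 (A F : Type) (ar : F -> nat)
  (op : forall f : F, ('I_(ar f) -> A) -> A) :
  (exists m : term ar 3, is_minority_term op m) <->
  ((exists p : term ar 3, is_maltsev_term op p) /\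
   (exists t : term ar 6, is_minority_majority_term op t)).
Proof.
split.
- move=> [m Hm]; split.
  + by exists m; exact: minority_maltsev.
  + by exists (widen3 m); exact: minority_minority_majority.
- move=> [[p Hp] [t Ht]].
  by exists (minority_of_maltsev p t); exact: minority_of_maltsevP.
Qed.
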